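(* Let $m,d\in\mathbb N$. Let $H$ be a bipartite graph with vertex classes $X$ and $Y$ such that any two sets $X'\subseteq X$, $Y'\subseteq Y$ with $|X'|=|Y'|=m$ have an edge between them. If $|Y|\ge (3d+4)m$, then there is a set $B\subseteq X$ with $|B|\le m$ such that every $U\subseteq X\setminus B$ with $|U|\le 2m$ satisfies $|N(U)|\ge d|U|$.
   Context: For $U\subseteq V(H)$, $N(U)=\big(\bigcup_{u\in U}N(u)\big)\setminus U$ is the exterior neighbourhood in $H$. *)

From mathcomp Require Import all_boot.
Set Implicit Arguments. Unset Strict Implicit. Unset Printing Implicit Defensive.

Definition simple_graph (V : finType) (e : rel V) : Prop :=
  irreflexive e /\ symmetric e.

Definition bipartite_with (V : finType) (e : rel V) (X Y : {set V}) : Prop :=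
  [disjoint X & Y] /\ X :|: Y = [set: V] /\
  (forall u v, e u v -> (u \in X) && (v \in Y) || (u \in Y) && (v \in X)).

Definition nbr (V : finType) (e : rel V) (u : V) : {set V} := [set v | e u v].

Definition ext_nbhd (V : finType) (e : rel V) (U : {set V}) : {set V} :=
  (\bigcup_(u in U) nbr e u) :\: U.

From mathcomp Require Import all_boot.
From mathcomp Require Import zify.
Set Implicit Arguments. Unset Strict Implicit. Unset Printing Implicit Defensive.

(* Call S ⊆ X poor if |S| <= 2m and |N(S)| <= d|S|, and let B be a poor set of
   maximum size. The edge condition forces every U ⊆ X with |U| >= m to have
   |N(U)| > |Y| - m, which is far more than a poor set can afford; hence
   |B| < m. If some U ⊆ X \ B with |U| <= 2m had |N(U)| < d|U|, then U ∪ B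
   would either be a larger poor set or, having more than 2m elements, a set
   of size at least m with |N(U ∪ B)| <= |N(U)| + |N(B)| < 3dm <= |Y| - m. *)

Lemma exists_subset_card (T : finType) (A : {set T}) n :
  n <= #|A| -> exists S : {set T}, S \subset A /\ #|S| = n.
Proof.
move/card_geqP=> [s [uniq_s size_s sub_s]]; exists [set x in s]; split.
  by apply/subsetP=> x; rewrite inE; exact: sub_s.
by rewrite cardsE (card_uniqP uniq_s) size_s.
Qed.

Section BipartiteExpansion.

Variables (V : finType) (e : rel V).

Lemma mem_ext_nbhd (U : {set V}) x y :
  x \in U -> y \notin U -> e x y -> y \in ext_nbhd e U.
Proof.
by move=> xU yU exy; rewrite /ext_nbhd !inE yU; apply/bigcupP; exists x; rewrite ?inE.
Qed.

Lemma ext_nbhdU (U W : {set V}) :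
  ext_nbhd e (U :|: W) \subset ext_nbhd e U :|: ext_nbhd e W.
Proof.
apply/subsetP=> y /setDP[/bigcupP[x xUW]]; rewrite inE => exy.
rewrite in_setU negb_or => /andP[yU yW]; apply/setUP.
by case/setUP: xUW => [xU|xW]; [left|right]; exact: mem_ext_nbhd exy.
Qed.

Lemma card_ext_nbhdU (U W : {set V}) :
  #|ext_nbhd e (U :|: W)| <= #|ext_nbhd e U| + #|ext_nbhd e W|.
Proof. exact: leq_trans (subset_leq_card (ext_nbhdU U W)) (leq_card_setU _ _). Qed.

Variables (X Y : {set V}) (m : nat).
Hypothesis disjXY : [disjoint X & Y].
Hypothesis joined : forall X' Y' : {set V}, X' \subset X -> Y' \subset Y ->
  #|X'| = m -> #|Y'| = m -> exists x y, x \in X' /\ y \in Y' /\ e x y.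

Lemma card_ext_nbhd_large (U : {set V}) :
  U \subset X -> m <= #|U| -> #|Y| < #|ext_nbhd e U| + m.
Proof.
move=> UX mU; rewrite ltnNge; apply/negP=> small_nbhd.
have mY : m <= #|Y :\: ext_nbhd e U|.
  have := subset_leq_card (subsetIr Y (ext_nbhd e U)).
  move: small_nbhd; rewrite -(cardsID (ext_nbhd e U) Y); lia.
have [X' [X'U cardX']] := exists_subset_card mU.
have [Y' [Y'D cardY']] := exists_subset_card mY.
have Y'Y := subset_trans Y'D (subsetDl _ _).
have [x [y [xX' [yY' exy]]]] :=
  joined (subset_trans X'U UX) Y'Y cardX' cardY'.
have yU : y \notin U.
  apply: contraTN (subsetP Y'Y y yY') => /(subsetP UX) yX.
  by rewrite (disjointFr disjXY yX).
have := subsetP Y'D y yY'.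
by rewrite inE (mem_ext_nbhd (subsetP X'U x xX') yU exy).
Qed.

Variable d : nat.

Definition poorly_expanding (S : {set V}) : bool :=
  [&& S \subset X, #|S| <= 2 * m & #|ext_nbhd e S| <= d * #|S|].

Lemma exists_max_poorly_expanding :
  exists B, poorly_expanding B /\
    forall S, poorly_expanding S -> #|S| <= #|B|.
Proof.
have poor0 : poorly_expanding set0.
  rewrite /poorly_expanding sub0set cards0 muln0 leqn0 cards_eq0 /=.
  by apply/eqP/setP=> y; rewrite !inE big_set0 inE andbF.
by case: (arg_maxnP (fun S : {set V} => #|S|) poor0) => B; exists B.
Qed.

Lemma card_poorly_expanding_lt (S : {set V}) :
  (2 * d + 1) * m <= #|Y| -> poorly_expanding S -> #|S| < m.
Proof.
move=> largeY /and3P[SX S2m poorS]; rewrite ltnNge; apply/negP=> mS.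
have := card_ext_nbhd_large SX mS.
have : d * #|S| <= d * (2 * m) by rewrite leq_mul2l S2m orbT.
lia.
Qed.

Lemma expanding_off_max_poorly_expanding (B : {set V}) :
  (3 * d + 1) * m <= #|Y| ->
  poorly_expanding B -> (forall S, poorly_expanding S -> #|S| <= #|B|) ->
  forall U : {set V}, U \subset X :\: B -> #|U| <= 2 * m ->
    d * #|U| <= #|ext_nbhd e U|.
Proof.
move=> largeY poorB maxB U; rewrite subsetD => /andP[UX disjUB] U2m.
rewrite leqNgt; apply/negP=> poorU.
have Bm : #|B| < m.
  by apply: card_poorly_expanding_lt poorB; apply: leq_trans largeY; nia.
move: poorB => /and3P[BX _ poorB].
have UBX : U :|: B \subset X by rewrite subUset UX.
have cardUB : #|U :|: B| = #|U| + #|B|.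
  by rewrite cardsU disjoint_setI0 // cards0 subn0.
have nbhdUB := card_ext_nbhdU U B.
case: (leqP #|U :|: B| (2 * m)) => UB2m.
  have : poorly_expanding (U :|: B).
    by rewrite /poorly_expanding UBX UB2m /= cardUB; nia.
  by move/maxB; rewrite cardUB; nia.
have mUB : m <= #|U :|: B| by lia.
have := card_ext_nbhd_large UBX mUB; nia.
Qed.

End BipartiteExpansion.

Theorem proposition3p37 (m d : nat) (V : finType) (e : rel V) (X Y : {set V}) :
  simple_graph e ->
  bipartite_with e X Y ->
  (forall X' Y' : {set V}, X' \subset X -> Y' \subset Y ->
     #|X'| = m -> #|Y'| = m -> exists x y, x \in X' /\ y \in Y' /\ e x y) ->
  (3 * d + 4) * m <= #|Y| ->
  exists B : {set V}, B \subset X /\ #|B| <= m /\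
    forall U : {set V}, U \subset X :\: B -> #|U| <= 2 * m ->
      d * #|U| <= #|ext_nbhd e U|.
Proof.
move=> _ [disjXY _] joined largeY.
have [B [poorB maxB]] := exists_max_poorly_expanding e X m d.
have Bm : #|B| < m.
  apply: (card_poorly_expanding_lt disjXY joined _ poorB).
  by apply: leq_trans largeY; nia.
exists B; split; first by case/and3P: poorB.
split; first exact: ltnW.
apply: (expanding_off_max_poorly_expanding disjXY joined _ poorB maxB).
by apply: leq_trans largeY; nia.
Qed.
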